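(* For each $n<\omega$ let $G_n$ be a non-trivial finite group, and suppose there is a fixed group $\Gamma$ such that $G_n=\Gamma$ for infinitely many $n<\omega$. Then the compact group $G=\prod_{n<\omega}G_n$ (product topology, each factor discrete, normalized Haar measure) has a subgroup that is not Haar measurable. *)

From HB Require Import structures.
From mathcomp Require Import all_boot all_order all_algebra all_fingroup.
From mathcomp Require Import all_classical all_reals all_analysis.
Set Implicit Arguments. Unset Strict Implicit. Unset Printing Implicit Defensive.
Import Order.TTheory GRing.Theory Num.Theory.
Local Open Scope classical_set_scope.
Local Open Scope ring_scope.

Section ProdGroup.
Variable gT : nat -> finGroupType.

Definition prodG := forall n : nat, gT n.

Definition prod_one : prodG := fun n => (1%g : gT n).
Definition prod_mul (x y : prodG) : prodG := fun n => (x n * y n)%g.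
Definition prod_inv (x : prodG) : prodG := fun n => ((x n)^-1)%g.

Definition is_subgroup (H : set prodG) : Prop :=
  H prod_one /\
  (forall x y, H x -> H y -> H (prod_mul x y)) /\
  (forall x, H x -> H (prod_inv x)).

Definition cyl (x : prodG) (n : nat) : set prodG :=
  [set y | forall i, (i < n)%N -> y i = x i].

Variable R : realType.

(* Haar (= product of normalized counting measures) mass of a basic cylinder
   of depth n. *)
Definition cyl_mass (n : nat) : R := (\prod_(i < n) (#|gT i|%:R : R))^-1.

(* Haar outer measure: infimum of total masses of countable covers by
   basic cylinders. *)
Definition haar_outer (A : set prodG) : \bar R :=
  ereal_inf [set (\sum_(0 <= k <oo) ((cyl_mass (c k).2)%:E))%E
            | c in [set c : nat -> prodG * nat |
                     A `<=` \bigcup_k cyl (c k).1 (c k).2]].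

(* Haar measurable = Caratheodory measurable for the Haar outer measure,
   i.e. measurable for the completed Haar measure. *)
Definition haar_measurable (A : set prodG) : Prop :=
  caratheodory_measurable haar_outer A.

End ProdGroup.

From HB Require Import structures.
From mathcomp Require Import all_boot all_order all_algebra all_fingroup.
From mathcomp Require Import all_classical all_reals all_analysis.
From mathcomp Require Import zify lra.
Set Implicit Arguments. Unset Strict Implicit. Unset Printing Implicit Defensive.
Import Order.TTheory GRing.Theory Num.Theory.
Local Open Scope classical_set_scope.
Local Open Scope ring_scope.

(* Choose an ultrafilter U on the infinite set I of indices n with
   G_n isomorphic to Gamma, containing the cofinite subsets of I, and let H be
   the set of x with iota_n (x n) = 1 for U-almost all n in I, where iota_n is
   the isomorphism G_n -> Gamma.  H is a subgroup of index at most |Gamma|,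
   it is proper (a sequence of nontrivial elements is not in H, so H and one of
   its translates are disjoint), and it contains every finitely supported x.
   The last property makes the Haar outer measure of H satisfy a zero-one law:
   H meets every cylinder of depth N in the same proportion r of its mass, so
   approximating H from outside by finitely many cylinders forces r <= r^2.
   Finite index gives r > 0, hence r = 1, and the disjoint translate also has
   outer measure 1; Caratheodory measurability of H would then give
   1 = mu* (G) = mu* (H) + mu* (~H) >= 2. *)

Lemma nneseries_le_partial (R : realType) (u v : nat -> \bar R) :
  (forall k, 0 <= u k)%E -> (forall k, 0 <= v k)%E ->
  (forall n, exists m, \sum_(0 <= k < n) u k <= \sum_(0 <= k < m) v k)%E ->
  (\sum_(0 <= k <oo) u k <= \sum_(0 <= k <oo) v k)%E.
Proof.
move=> u0 v0 uv; apply: lime_le; first exact: is_cvg_nneseries.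
apply: nearW => n; have [m hm] := uv n; apply: (le_trans hm).
exact: nneseries_lim_ge.
Qed.

Section ProdGroupLaws.
Variable gT : nat -> finGroupType.
Local Notation G := (prodG gT).

Lemma prod_mulKg (t x : G) : prod_mul (prod_inv t) (prod_mul t x) = x.
Proof. by apply: functional_extensionality_dep => i; rewrite /prod_mul mulKg. Qed.

Lemma prod_mulKVg (t x : G) : prod_mul t (prod_mul (prod_inv t) x) = x.
Proof. by apply: functional_extensionality_dep => i; rewrite /prod_mul mulKVg. Qed.

Lemma prod_mulgK (x t : G) : prod_mul (prod_mul x t) (prod_inv t) = x.
Proof. by apply: functional_extensionality_dep => i; rewrite /prod_mul mulgK. Qed.

End ProdGroupLaws.

Section HaarOuterMeasure.
Variable gT : nat -> finGroupType.
Variable R : realType.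
Hypothesis card_gt1 : forall n, (1 < #|gT n|)%N.
Local Notation G := (prodG gT).
Local Notation mass := (cyl_mass gT R).

Lemma cyl_mass0 : mass 0 = 1.
Proof. by rewrite /cyl_mass big_ord0 invr1. Qed.

Lemma cyl_massS n : mass n.+1 = mass n / #|gT n|%:R.
Proof. by rewrite /cyl_mass big_ord_recr /= invfM. Qed.

Lemma card_factor_gt0 n : (0 < #|gT n|)%N.
Proof. exact: ltn_trans (card_gt1 n). Qed.

Lemma cyl_mass_gt0 n : 0 < mass n.
Proof.
elim: n => [|n IH]; first by rewrite cyl_mass0.
by rewrite cyl_massS divr_gt0 // ltr0n card_factor_gt0.
Qed.

Lemma sum_cyl_massS n : \sum_(a : gT n) mass n.+1 = mass n.
Proof.
by rewrite sumr_const -mulr_natr cyl_massS mulfVK // pnatr_eq0 -lt0n card_factor_gt0.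
Qed.

Lemma card_prod_ge n : (n.+1 <= \prod_(i < n) #|gT i|)%N.
Proof.
elim: n => [|n IH]; first by rewrite big_ord0.
rewrite big_ord_recr /=; have := leq_mul IH (card_gt1 n).
by move: (\prod_(i < n) _)%N (#|gT n|) => P c; lia.
Qed.

Lemma cyl_mass_small (e : R) : 0 < e -> exists N, mass N <= e.
Proof.
move=> e0; have he : 0 <= e^-1 by rewrite invr_ge0 ltW.
have := archi_boundP he.
set N := Num.Def.archi_bound _ => ltN; exists N.
rewrite -[e]invrK /cyl_mass -natr_prod lef_pV2 ?posrE ?invr_gt0 ?ltr0n //.
  by rewrite (le_trans (ltW ltN)) // ler_nat (leq_trans _ (card_prod_ge N)).
by rewrite (leq_trans _ (card_prod_ge N)).
Qed.

Definition prod_upd (x : G) (n : nat) (a : gT n) : G := fun i =>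
  match n =P i with ReflectT e => ecast j (gT j) e a | ReflectF _ => x i end.
Arguments prod_upd x n a _ : clear implicits.

Lemma prod_upd_eq x n a : prod_upd x n a n = a.
Proof. by rewrite /prod_upd; case: (n =P n) => [e|//]; rewrite (eq_axiomK e). Qed.

Lemma prod_upd_neq x n a i : i != n -> prod_upd x n a i = x i.
Proof. by move=> /eqP ne; rewrite /prod_upd; case: (n =P i) => // e; case: ne. Qed.

Definition agreeb (x p : G) d := [forall i : 'I_d, x i == p i].

Lemma agreebP x p d : reflect (forall i, (i < d)%N -> x i = p i) (agreeb x p d).
Proof.
apply: (iffP forallP) => [h i id|h i]; first exact/eqP/(h (Ordinal id)).
exact/eqP/h.
Qed.

Lemma agreebC x p d : agreeb x p d = agreeb p x d.
Proof. by apply/agreebP/agreebP => h i /h. Qed.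

Lemma agreeb_upd x p d N a :
  (d <= N)%N -> agreeb (prod_upd x N a) p d = agreeb x p d.
Proof.
move=> dN; apply/agreebP/agreebP => h i id; rewrite -h // ?prod_upd_neq //;
  by apply/eqP => ein; move: id; rewrite ein; lia.
Qed.

Lemma agreeb_updS x p N a :
  agreeb (prod_upd x N a) p N.+1 = agreeb x p N && (a == p N).
Proof.
apply/agreebP/andP => [h|[/agreebP h /eqP ha] i].
  split; last by rewrite -h // prod_upd_eq.
  by apply/agreebP => i iN; rewrite -h ?prod_upd_neq //; [lia|apply/eqP; lia].
rewrite ltnS leq_eqVlt => /orP[/eqP ->|iN]; first by rewrite prod_upd_eq.
by rewrite prod_upd_neq ?h //; apply/eqP; lia.
Qed.

Lemma cyl_updS x n y : cyl x n y -> cyl (prod_upd x n (y n)) n.+1 y.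
Proof.
move=> hy i; rewrite ltnS leq_eqVlt => /orP[/eqP ->|iN]; first by rewrite prod_upd_eq.
by rewrite prod_upd_neq ?hy //; apply/eqP; lia.
Qed.

Lemma cyl0 (x : G) : cyl x 0 = setT.
Proof. by apply/seteqP; split => // y _ i. Qed.

(* Covers are sequences of optional cylinders: intersecting a cylinder with
   another one may leave nothing, encoded by [None]. *)
Local Notation ocover := (nat -> option (G * nat)).

Definition ocyl (o : option (G * nat)) : set G :=
  if o is Some (p, d) then cyl p d else set0.
Definition omass (o : option (G * nat)) : \bar R :=
  if o is Some (p, d) then (mass d)%:E else 0%E.
Definition depth (o : option (G * nat)) := if o is Some (_, d) then d else 0%N.

Lemma omass_ge0 o : (0 <= omass o)%E.
Proof. by case: o => [[p d]|] //=; rewrite lee_fin ltW // cyl_mass_gt0. Qed.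

Definition orestr (o : option (G * nat)) (x : G) (N : nat) : option (G * nat) :=
  match o with
  | Some (p, d) => if (d <= N)%N then (if agreeb x p d then Some (x, N) else None)
                   else (if agreeb p x N then Some (p, d) else None)
  | None => None end.

Lemma orestr_cover o x N y : ocyl o y -> cyl x N y -> ocyl (orestr o x N) y.
Proof.
case: o => [[p d]|] //= /agreebP hp /agreebP hx.
case: ifP => dN.
  have -> : agreeb x p d.
    apply/agreebP => i id; move/agreebP: hp => <- //.
    by move/agreebP: hx => -> //; lia.
  exact/agreebP.
have -> : agreeb p x N.
  apply/agreebP => i iN; move/agreebP: hp => <-; last by lia.
  by move/agreebP: hx => ->.
exact/agreebP.
Qed.

Lemma orestr_deep o x N : (depth o <= N)%N ->
  orestr o x N != None -> orestr o x N = Some (x, N).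
Proof. by case: o => [[p d]|] //= ->; case: ifP. Qed.

Lemma omass_orestr o x N : omass (orestr o x N) =
  (\sum_(a : gT N) omass (orestr o (prod_upd x N a) N.+1))%E.
Proof.
have sum_mass : (\sum_(a : gT N) (mass N.+1)%:E)%E = (mass N)%:E.
  by rewrite sumEFin sum_cyl_massS.
case: o => [[p d]|] /=; last by rewrite big1.
case: (leqP d N) => dN.
  rewrite (leqW dN); under eq_bigr do rewrite agreeb_upd //.
  by case: ifP => _ /=; [rewrite sum_mass|rewrite big1].
case: (leqP d N.+1) => dN1; first have -> : d = N.+1 by lia.
all: under eq_bigr do rewrite ?[agreeb p _ _]agreebC agreeb_updS.
all: rewrite agreebC; case: (agreeb x p N) => /=; last by rewrite big1.
all: by rewrite (bigD1 (p N)) //= eqxx big1 ?adde0 // => a /negbTE ->.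
Qed.

Local Open Scope ereal_scope.

Definition ocovers (A : set G) (c : ocover) := A `<=` \bigcup_k ocyl (c k).
Definition omass_sum (c : ocover) := \sum_(0 <= k <oo) omass (c k).
Definition oouter (A : set G) : \bar R :=
  ereal_inf [set omass_sum c | c in [set c | ocovers A c]].

Lemma omass_sum_ge0 c : 0 <= omass_sum c.
Proof. by apply: nneseries_ge0 => n _ _; exact: omass_ge0. Qed.

Lemma omass_le_sum c k : omass (c k) <= omass_sum c.
Proof.
rewrite /omass_sum (le_trans _ (nneseries_lim_ge k.+1 _)) //; last first.
  by move=> *; exact: omass_ge0.
rewrite big_nat_recr //= leeDr //; apply: sume_ge0 => *; exact: omass_ge0.
Qed.

Lemma oouter_le A c : ocovers A c -> oouter A <= omass_sum c.
Proof. by move=> hc; apply: ereal_inf_lbound; exists c. Qed.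

Lemma oouter_ge A t : (forall c, ocovers A c -> t <= omass_sum c) -> t <= oouter A.
Proof. by move=> h; apply: le_ereal_inf_tmp => _ [c hc <-]; exact: h. Qed.

Lemma oouter_ge0 A : 0 <= oouter A.
Proof. by apply: oouter_ge => c _; exact: omass_sum_ge0. Qed.

Lemma oouter_le_trans A B : A `<=` B -> oouter A <= oouter B.
Proof. by move=> AB; apply: oouter_ge => c hc; apply: oouter_le => y /AB /hc. Qed.

Lemma oouter_cyl x N : oouter (cyl x N) <= (mass N)%:E.
Proof.
pose c k := if k == 0%N then Some (x, N) else None.
apply: (le_trans (oouter_le (c := c) _)); first by move=> y hy; exists 0%N.
rewrite /omass_sum (nneseries_split 0 1); last by move=> *; exact: omass_ge0.
by rewrite add0n big_nat1 eseries0 ?adde0 // => -[].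
Qed.

Lemma oouter_le1 A : oouter A <= 1.
Proof.
by rewrite -cyl_mass0 (le_trans _ (oouter_cyl (prod_one gT) 0)) // oouter_le_trans.
Qed.

Lemma oouter_fin A : oouter A \is a fin_num.
Proof.
by rewrite ge0_fin_numE ?oouter_ge0 // (le_lt_trans (oouter_le1 A)) // ltry.
Qed.

Lemma oouter_translate A B t :
  A `<=` [set prod_mul t b | b in B] -> oouter A <= oouter B.
Proof.
move=> AB; apply: oouter_ge => c hc.
pose ct k := omap (fun pd : G * nat => (prod_mul t pd.1, pd.2)) (c k).
apply: (le_trans (oouter_le (c := ct) _)).
  move=> a /AB [b /hc [k _ hk] <-]; exists k => //.
  by rewrite /ct; move: hk; case: (c k) => [[p d]|] //= hk i id; rewrite /prod_mul hk.
suff -> : omass_sum ct = omass_sum c by [].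
by apply: eq_eseriesr => k _; rewrite /ct; case: (c k) => [[]|].
Qed.

Section InterleaveCovers.
Variables (T : finType) (x0 : T) (e : T -> ocover).
Local Notation M := #|T|.

Definition interleave : ocover := fun k => e (nth x0 (enum T) (k %% M)) (k %/ M).

Let M_gt0 : (0 < M)%N.
Proof. by apply/card_gt0P; exists x0. Qed.

Lemma interleave_at j i :
  (i < M)%N -> interleave (j * M + i) = e (nth x0 (enum T) i) j.
Proof.
move=> iM; rewrite /interleave modnMDl modn_small // divnMDl //.
by rewrite divn_small // addn0.
Qed.

Lemma interleave_cover a j y : ocyl (e a j) y -> exists k, ocyl (interleave k) y.
Proof.
move=> h; exists (j * M + index a (enum T))%N.
by rewrite interleave_at ?nth_index ?mem_enum // cardE index_mem mem_enum.
Qed.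

Lemma interleave_partial n : \sum_(0 <= k < M * n) omass (interleave k) =
  \sum_(0 <= j < n) \sum_(a : T) omass (e a j).
Proof.
elim: n => [|n IH]; first by rewrite muln0 !big_geq.
rewrite big_nat_recr //= -IH mulnSr (big_cat_nat (n := M * n)) //= ?leq_addr //.
congr (_ + _); rewrite -{1}[(M * n)%N]add0n big_addn addKn.
rewrite -[RHS]big_enum /= (big_nth x0) -cardE !big_mkord.
by apply: eq_bigr => i _; rewrite addnC mulnC interleave_at.
Qed.

Lemma omass_sum_interleave : omass_sum interleave = \sum_(a : T) omass_sum (e a).
Proof.
have sum_ge0 j : 0 <= \sum_(a : T) omass (e a j).
  by apply: sume_ge0 => *; exact: omass_ge0.
rewrite /omass_sum -nneseries_sum; last by move=> *; exact: omass_ge0.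
apply/eqP; rewrite eq_le; apply/andP; split.
  apply: nneseries_le_partial => [k|//|n]; first exact: omass_ge0.
  exists n; rewrite -interleave_partial.
  apply: lee_sum_nneg_natr => [k _ _|]; first exact: omass_ge0.
  by rewrite leq_pmull.
apply: nneseries_le_partial => [//|k|n]; first exact: omass_ge0.
by exists (M * n)%N; rewrite interleave_partial.
Qed.

End InterleaveCovers.

Lemma oouter_sub_additive (T : finType) (x0 : T) A (B : T -> set G) :
  A `<=` \bigcup_a B a -> oouter A <= \sum_(a : T) oouter (B a).
Proof.
move=> AB; apply/lee_addgt0Pr => eps eps0.
have M0 : (0 < #|T|%:R :> R)%R by rewrite ltr0n; apply/card_gt0P; exists x0.
set d := (eps / #|T|%:R)%R.
have d0 : (0 < d)%R by rewrite divr_gt0.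
have : forall a, exists c, ocovers (B a) c /\ omass_sum c < oouter (B a) + d%:E.
  move=> a; have : oouter (B a) < oouter (B a) + d%:E.
    by rewrite lteDl ?oouter_fin // lte_fin.
  by move/ereal_inf_lt => [_ [c hc <-] lt]; exists c.
move/choice => [e he].
apply: (le_trans (oouter_le (c := interleave x0 e) _)).
  move=> y /AB [a _ hy]; have [j _ hj] := (proj1 (he a)) y hy.
  by have [k hk] := interleave_cover x0 hj; exists k.
have -> : eps%:E = \sum_(a : T) d%:E.
  by rewrite sumEFin sumr_const -mulr_natr mulfVK // gt_eqF.
rewrite omass_sum_interleave -big_split /=; apply: lee_sum => a _.
exact: ltW (proj2 (he a)).
Qed.

Lemma oouter_cylI_children A x n : oouter (A `&` cyl x n) <=
    \sum_(a : gT n) oouter (A `&` cyl (prod_upd x n a) n.+1).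
Proof.
apply: (oouter_sub_additive 1%g) => w [Aw hw]; exists (w n); split => //.
exact: cyl_updS.
Qed.

Lemma haar_outerE A : haar_outer R A = oouter A.
Proof.
apply/eqP; rewrite eq_le; apply/andP; split; last first.
  apply: le_ereal_inf_tmp => _ [c hc <-].
  apply: (le_trans (oouter_le (c := fun k => Some (c k)) _)).
    by move=> y /hc [k _ hk]; exists k => //=; move: hk; case: (c k).
  suff -> : omass_sum (fun k => Some (c k)) = \sum_(0 <= k <oo) (mass (c k).2)%:E by [].
  by apply: eq_eseriesr => k _; case: (c k).
apply: oouter_ge => c hc; apply/lee_addgt0Pr => eps eps0.
have : forall k, exists D, (mass D <= eps / (2 ^ k.+1)%:R)%R.
  by move=> k; apply: cyl_mass_small; rewrite divr_gt0 // ltr0n expn_gt0.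
move/choice => [D hD].
(* An empty entry [k] of [c] is replaced by a cylinder of mass at most
   eps/2^(k+1). *)
pose c' k := if c k is Some pd then pd else (prod_one gT, D k).
apply: (@le_trans _ _ (\sum_(0 <= k <oo) (mass (c' k).2)%:E)).
  apply: ereal_inf_lbound; exists c' => //.
  move=> y /hc [k _ hk]; exists k => //; rewrite /c'; move: hk.
  by case: (c k) => [[p d]|].
apply: (@le_trans _ _ (\sum_(0 <= k <oo) (omass (c k) + (eps / (2 ^ k.+1)%:R)%:E))).
  apply: lee_nneseries => [k _ _|k _]; first by rewrite lee_fin ltW // cyl_mass_gt0.
  rewrite /c'; case: (c k) => [[p d]|] /=.
    by rewrite leeDl // lee_fin divr_ge0 // ltW.
  by rewrite add0e lee_fin.
exact: epsilon_trick (fun k => omass_ge0 _) (ltW eps0).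
Qed.

Definition restr_mass (c : ocover) x N := omass_sum (fun k => orestr (c k) x N).

Lemma restr_mass_ge0 c x N : 0 <= restr_mass c x N.
Proof. exact: omass_sum_ge0. Qed.

Lemma restr_massS c x N :
  restr_mass c x N = \sum_(a : gT N) restr_mass c (prod_upd x N a) N.+1.
Proof.
rewrite /restr_mass /omass_sum -nneseries_sum; last by move=> *; exact: omass_ge0.
by apply: eq_eseriesr => k _; rewrite omass_orestr.
Qed.

Lemma restr_mass0 c x : restr_mass c x 0 = omass_sum c.
Proof.
apply: eq_eseriesr => k _; case: (c k) => [[p d]|] //=.
have agree0 y z : agreeb y z 0 by apply/agreebP.
case: (leqP d 0) => d0; last by rewrite agree0.
have -> : d = 0%N by lia.
by rewrite agree0.
Qed.

Lemma oouter_cylI_le A c x N :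
  ocovers A c -> oouter (A `&` cyl x N) <= restr_mass c x N.
Proof.
move=> hc; apply: oouter_le => y [/hc [k _ hk] hy]; exists k => //.
exact: orestr_cover.
Qed.

(* [F x n] and [F' x n] are functions of the cylinder [cyl x n]; an inequality
   at depth [N] propagates to the root. *)
Lemma le_cyl_root (F F' : G -> nat -> \bar R) N :
  (forall x n, (n < N)%N -> F x n <= \sum_(a : gT n) F (prod_upd x n a) n.+1) ->
  (forall x n, (n < N)%N -> \sum_(a : gT n) F' (prod_upd x n a) n.+1 <= F' x n) ->
  (forall x, F x N <= F' x N) -> forall x, F x 0%N <= F' x 0%N.
Proof.
move=> hF hF' hN.
suff h j : (j <= N)%N -> forall x, F x (N - j)%N <= F' x (N - j)%N.
  by move=> x; have := h N (leqnn N) x; rewrite subnn.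
elim: j => [|j IH] jN x; first by rewrite subn0.
have e : (N - j.+1).+1 = (N - j)%N by lia.
apply: (le_trans (hF x _ _)); first by lia.
apply: (le_trans _ (hF' x _ _)); last by lia.
by apply: lee_sum => a _; rewrite e; apply: IH; lia.
Qed.

Definition uncovered (c : ocover) x n :=
  forall K, exists y, cyl x n y /\ forall k, (k < K)%N -> ~ ocyl (c k) y.

Lemma uncovered_child c x n :
  uncovered c x n -> exists a, uncovered c (prod_upd x n a) n.+1.
Proof.
move=> hb; apply: contrapT => hn.
have : forall a, exists K, forall y, cyl (prod_upd x n a) n.+1 y ->
    exists2 k, (k < K)%N & ocyl (c k) y.
  move=> a; apply: contrapT => ha; apply: hn; exists a => K.
  apply: contrapT => hK; apply: ha; exists K => y hy.
  apply: contrapT => hk; apply: hK; exists y; split => // k kK hc.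
  by apply: hk; exists k.
move/choice => [Kf hKf].
have [y [hy hyK]] := hb (\max_(a : gT n) Kf a).
have [k kK hk] := hKf _ _ (cyl_updS hy).
by apply: (hyK k) => //; apply: (leq_trans kK); apply: leq_bigmax.
Qed.

(* Koenig's lemma: an uncovered cylinder has an uncovered child, so an
   infinite branch of uncovered cylinders converges to an uncovered point. *)
Lemma finite_subcover c : ocovers setT c ->
  exists K, forall y, exists2 k, (k < K)%N & ocyl (c k) y.
Proof.
move=> hc; apply: contrapT => hK.
have : forall p : G * nat, exists y : G,
    (uncovered c p.1 p.2 -> uncovered c y p.2.+1) /\ agreeb y p.1 p.2.
  move=> [x n] /=; have [hb|hb] := pselect (uncovered c x n).
    have [a ha] := uncovered_child hb; exists (prod_upd x n a); split => //.
    by rewrite agreeb_upd //; apply/agreebP.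
  by exists x; split => //; apply/agreebP.
move/choice => [g hg].
pose X := fix X n := if n is m.+1 then g (X m, m) else prod_one gT.
have hX n : uncovered c (X n) n.
  elim: n => [|n IH]; last exact: (proj1 (hg (X n, n))).
  move=> K; apply: contrapT => hy; apply: hK; exists K => y.
  apply: contrapT => hk; apply: hy; exists y; split => // k kK ck.
  by apply: hk; exists k.
have hXa j m : (j <= m)%N -> forall i, (i < j)%N -> X m i = X j i.
  elim: m => [|m IH] jm i ij; first by have -> : j = 0%N by lia.
  case: (leqP j m) => jm'; last by have -> : j = m.+1 by lia.
  by rewrite -IH //; have /agreebP /= h := proj2 (hg (X m, m)); apply: h; lia.
pose z : G := fun i => X i.+1 i.
have [k _ hk] := hc z I.
case ek : (c k) hk => [[p d]|] //= hk.
have [y [hy hyk]] := hX d k.+1.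
apply: (hyk k) => //; rewrite ek /= => i id.
by rewrite hy // -hk // /z (hXa i.+1 d).
Qed.

Lemma oouter_setT : 1 <= oouter setT.
Proof.
apply: oouter_ge => c hc; have [K hK] := finite_subcover hc.
pose N := (\max_(k < K) depth (c k))%N.
pose cK k := if (k < K)%N then c k else None.
apply: (@le_trans _ _ (omass_sum cK)); last first.
  apply: lee_nneseries => [k _ _|k _]; first exact: omass_ge0.
  by rewrite /cK; case: ifP => // _; exact: omass_ge0.
rewrite -cyl_mass0 -(restr_mass0 cK (prod_one gT)).
apply: (@le_cyl_root (fun _ n => (mass n)%:E) (restr_mass cK) N) => [x n _|x n _|x].
- by rewrite sumEFin sum_cyl_massS.
- by rewrite -restr_massS.
have [k kK hk] := hK x; apply: (le_trans _ (omass_le_sum _ k)).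
have dN : (depth (c k) <= N)%N.
  by apply: (@leq_bigmax _ (fun k : 'I_K => _) (Ordinal kK)).
rewrite /cK kK (@orestr_deep _ x N) //.
case ek : (c k) hk dN => [[p d]|] //= /agreebP hk dN.
by rewrite dN hk.
Qed.

Fixpoint lsum (N : nat) (f : G -> R) (j : nat) (x : G) : R :=
  if j is j'.+1 then (\sum_(a : gT (N - j)) lsum N f j' (prod_upd x (N - j) a))%R
  else f x.

Definition levelsum N f x n := lsum N f (N - n) x.

Lemma levelsum_depth N f x : levelsum N f x N = f x.
Proof. by rewrite /levelsum subnn. Qed.

Lemma levelsumS N f x n : (n < N)%N ->
  levelsum N f x n = (\sum_(a : gT n) levelsum N f (prod_upd x n a) n.+1)%R.
Proof.
move=> nN; rewrite /levelsum; have -> : (N - n = (N - n.+1).+1)%N by lia.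
by rewrite /=; have -> : (N - (N - n.+1).+1 = n)%N by lia.
Qed.

Definition odrop K (c : ocover) : ocover := fun k => if (k < K)%N then None else c k.

Definition hits (c : ocover) K N x := [exists k : 'I_K, orestr (c k) x N != None].

(* The mass of the union of the first [K] cylinders of [c], if they have depth
   at most [N]. *)
Definition head_mass c K N :=
  levelsum N (fun x => if hits c K N x then mass N else 0%R) (prod_one gT) 0.

(* At depth [N], a cylinder meeting the head lies inside it and carries its full
   mass, any other one carries at least [r] times its mass. *)
Lemma omass_sum_ge_head A (r : R) c K N : (0 <= r <= 1)%R -> ocovers A c ->
  (forall x, (r * mass N)%:E <= oouter (A `&` cyl x N)) ->
  (forall k, (k < K)%N -> (depth (c k) <= N)%N) ->
  (r + (1 - r) * head_mass c K N)%:E <= omass_sum c.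
Proof.
move=> /andP[r0 r1] hc hA dN.
set ind := fun x => if hits c K N x then mass N else 0%R.
pose F x n := (r * mass n + (1 - r) * levelsum N ind x n)%:E.
suff /(_ (prod_one gT)) : forall x, F x 0%N <= restr_mass c x 0.
  by rewrite restr_mass0 /F cyl_mass0 mulr1; apply.
apply: (@le_cyl_root F _ N) => [x n nN|x n _|x]; rewrite /F.
- by rewrite sumEFin big_split /= -!mulr_sumr sum_cyl_massS -levelsumS.
- by rewrite -restr_massS.
rewrite levelsum_depth /ind; case: ifP => [/existsP[k hk]|_].
  apply: (le_trans _ (omass_le_sum _ k)).
  by rewrite orestr_deep ?dN //= lee_fin -mulrDl addrC subrK mul1r.
by rewrite mulr0 addr0 (le_trans (hA x)) // oouter_cylI_le.
Qed.

Lemma oouter_le_head A c K N : ocovers A c ->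
  oouter A <= (head_mass c K N)%:E + omass_sum (odrop K c).
Proof.
move=> hc; set ind := fun x => if hits c K N x then mass N else 0%R.
pose F' x n := (levelsum N ind x n)%:E + restr_mass (odrop K c) x n.
suff /(_ (prod_one gT)) : forall x, oouter (A `&` cyl x 0) <= F' x 0%N.
  by rewrite cyl0 setIT /F' restr_mass0; apply.
apply: (@le_cyl_root (fun x n => oouter (A `&` cyl x n)) F' N)
  => [x n _|x n nN|x]; rewrite /F'.
- exact: oouter_cylI_children.
- by rewrite big_split /= sumEFin -levelsumS // -restr_massS.
rewrite levelsum_depth /ind; case: ifP => hx.
  apply: (le_trans (oouter_le_trans (B := cyl x N) _)); first by move=> y [].
  by rewrite (le_trans (oouter_cyl _ _)) // leeDl // restr_mass_ge0.
rewrite add0e; apply: oouter_le => y [Ay hy]; have [k _ hk] := hc y Ay; exists k => //.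
have hr := orestr_cover hk hy; rewrite /odrop; case: ifP => // kK.
move/negbT: hx; rewrite negb_exists => /forallP/(_ (Ordinal kK))/negPn/eqP hk0.
by rewrite hk0 in hr.
Qed.

Lemma omass_sum_odrop c K :
  omass_sum c = \sum_(0 <= k < K) omass (c k) + omass_sum (odrop K c).
Proof.
rewrite /omass_sum (nneseries_split 0 K); last by move=> *; exact: omass_ge0.
congr (_ + _); rewrite (nneseries_split 0 K); last by move=> *; exact: omass_ge0.
rewrite add0n big_nat big1 ?add0e => [|i /andP[_ iK]]; last by rewrite /odrop iK.
apply: congr_lim; apply/funext => n; apply: eq_big_nat => i /andP[Ki _].
by rewrite /odrop ltnNge Ki.
Qed.

Lemma odrop_small c (eps : R) : omass_sum c \is a fin_num -> (0 < eps)%R ->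
  exists K, omass_sum (odrop K c) <= eps%:E.
Proof.
move=> cfin eps0; set S := fine (omass_sum c).
have eS : omass_sum c = S%:E by rewrite fineK.
have [K _ hK] : \forall K \near \oo, (S - eps)%:E <= \sum_(0 <= k < K) omass (c k).
  apply: lte_lim; first by apply: lee_sum_nneg_natr => *; exact: omass_ge0.
    by apply: is_cvg_nneseries => *; exact: omass_ge0.
  by rewrite -/(omass_sum c) eS lte_fin ltrBlDr ltrDl.
have /hK {}hK := leqnn K; exists K.
have split_c := omass_sum_odrop c K.
have P0 : 0 <= \sum_(0 <= k < K) omass (c k) by apply: sume_ge0 => *; exact: omass_ge0.
have Pfin : \sum_(0 <= k < K) omass (c k) \is a fin_num.
  rewrite ge0_fin_numE // (le_lt_trans _ (ltry S)) // -eS split_c.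
  by rewrite leeDl ?omass_sum_ge0.
have Tfin : omass_sum (odrop K c) \is a fin_num.
  rewrite ge0_fin_numE ?omass_sum_ge0 // (le_lt_trans _ (ltry S)) // -eS split_c.
  by rewrite leeDr.
move: split_c hK; rewrite eS -(fineK Pfin) -(fineK Tfin) -EFinD !lee_fin => -[->] hK.
lra.
Qed.

Section FinitarySubgroup.
Variable H : set G.
Hypothesis H_subgroup : is_subgroup H.
Hypothesis H_finitary :
  forall t : G, (exists N, forall i, (N < i)%N -> t i = 1%g) -> H t.

Lemma subgroupM x y : H x -> H y -> H (prod_mul x y).
Proof. by case: H_subgroup => _ [hM _]; exact: hM. Qed.

Lemma subgroupV x : H x -> H (prod_inv x).
Proof. by case: H_subgroup => _ [_ hV]; exact: hV. Qed.

(* Translation by a finitely supported element of [H] moves [H] to itself and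
   one depth-[N+1] cylinder onto any other inside the same depth-[N] cylinder. *)
Lemma oouter_cylI_sibling y N a :
  oouter (H `&` cyl (prod_upd y N a) N.+1) <= oouter (H `&` cyl y N.+1).
Proof.
set z := prod_upd y N a.
pose t : G := fun i => if (i <= N)%N then (z i * (y i)^-1)%g else 1%g.
have Ht : H t by apply: H_finitary; exists N => i iN; rewrite /t ifF //; lia.
apply: (@oouter_translate _ _ t) => w [Hw hw].
exists (prod_mul (prod_inv t) w); last exact: prod_mulKVg.
split; first by apply: subgroupM => //; exact: subgroupV.
move=> i iN; rewrite /prod_mul /prod_inv /t ifT; last by lia.
by rewrite hw // invMg invgK -mulgA mulVg mulg1.
Qed.

Lemma oouter_cylI_ge (r : R) : r%:E <= oouter H ->
  forall N x, (r * mass N)%:E <= oouter (H `&` cyl x N).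
Proof.
move=> hr; elim=> [|N IH] y; first by rewrite cyl_mass0 mulr1 cyl0 setIT.
have := le_trans (IH y) (le_trans (oouter_cylI_children H y N)
  (lee_sum _ (fun a _ => oouter_cylI_sibling y a))).
rewrite -(fineK (oouter_fin (H `&` cyl y N.+1))) sumEFin sumr_const !lee_fin => h.
by rewrite cyl_massS mulrA ler_pdivrMr ?ltr0n ?card_factor_gt0 // mulr_natr.
Qed.

(* Zero-one law: [H] meets every cylinder in the proportion [r] of its mass, so
   covering [H] by finitely many cylinders up to [del] and a small tail
   yields [r <= r^2 + 2 del]. *)
Lemma oouter_subgroup_ge1 : 0 < oouter H -> 1 <= oouter H.
Proof.
move=> H0; rewrite leNgt; apply/negP => H1.
set r := fine (oouter H).
have er : oouter H = r%:E by rewrite fineK ?oouter_fin.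
have r0 : (0 < r)%R by rewrite -lte_fin -er.
have r1 : (r < 1)%R by rewrite -lte_fin -er.
set del := (r * (1 - r) / 4)%R.
have [c hc hS] : exists2 c, ocovers H c & omass_sum c < (r + del)%:E.
  have : oouter H < (r + del)%:E.
    by rewrite er lte_fin ltrDl divr_gt0 // mulr_gt0 // subr_gt0.
  by move/ereal_inf_lt => [_ [c hc <-] lt]; exists c.
have cfin : omass_sum c \is a fin_num.
  by rewrite ge0_fin_numE ?omass_sum_ge0 // (lt_trans hS) // ltry.
have [K hK] := odrop_small cfin (divr_gt0 r0 (ltr0Sn _ 1)).
pose N := (\max_(k < K) depth (c k))%N.
have dN k : (k < K)%N -> (depth (c k) <= N)%N.
  by move=> kK; apply: (@leq_bigmax _ (fun k : 'I_K => _) (Ordinal kK)).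
have r01 : (0 <= r <= 1)%R by rewrite !ltW.
have hr : r%:E <= oouter H by rewrite er.
have lower := omass_sum_ge_head r01 hc (oouter_cylI_ge hr N) dN.
have upper := le_trans (oouter_le_head K N hc) (leeD2l _ hK).
move: (le_lt_trans lower hS) upper; rewrite er -EFinD !lte_fin !lee_fin.
set u := head_mass c K N; rewrite /del => lt le.
have hu : (r / 2 <= u)%R by lra.
have : ((1 - r) * (r / 2) <= (1 - r) * u)%R by rewrite ler_wpM2l // subr_ge0 ltW.
have : (0 < r * (1 - r))%R by rewrite mulr_gt0 // subr_gt0.
lra.
Qed.

End FinitarySubgroup.

Lemma oouter_image_mul (t : G) B : oouter [set prod_mul t b | b in B] = oouter B.
Proof.
apply/eqP; rewrite eq_le; apply/andP; split; first exact: (oouter_translate (t := t)).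
by apply: (oouter_translate (t := prod_inv t)) => b Bb; exists (prod_mul t b);
  [exists b | rewrite prod_mulKg].
Qed.

Lemma finite_index_not_haar_measurable H (T : finType) (g : T -> G) (g1 : G) :
  is_subgroup H ->
  (forall t : G, (exists N, forall i, (N < i)%N -> t i = 1%g) -> H t) ->
  (forall x, exists a h, H h /\ x = prod_mul (g a) h) ->
  (forall h, H h -> ~ H (prod_mul g1 h)) ->
  ~ haar_measurable R H.
Proof.
move=> Hsub Hfin Hcosets Hg1 Hmeas.
have [a0 _] := Hcosets (prod_one gT).
have H_gt0 : 0 < oouter H.
  rewrite lt_neqAle oouter_ge0 andbT; apply/negP => /eqP H0.
  have : 1 <= \sum_(a : T) oouter [set prod_mul (g a) b | b in H].
    apply: (le_trans oouter_setT); apply: (oouter_sub_additive a0) => x _.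
    by have [a [h [Hh ->]]] := Hcosets x; exists a => //; exists h.
  by rewrite big1 ?lee_fin ?ler10 // => a _; rewrite oouter_image_mul -H0.
have H_ge1 := oouter_subgroup_ge1 Hsub Hfin H_gt0.
have HC_ge1 : 1 <= oouter (~` H).
  rewrite (le_trans H_ge1) // -(oouter_image_mul g1).
  by apply: oouter_le_trans => _ [h Hh <-]; exact: Hg1.
have := Hmeas setT; rewrite !haar_outerE !setTI => eT.
have := oouter_le1 setT; rewrite eT => le1.
have := le_trans (leeD H_ge1 HC_ge1) le1.
by rewrite -EFinD lee_fin; lra.
Qed.
End HaarOuterMeasure.

Lemma ultra_fiber (X : Type) (T : finType) (F : set_system X) (f : X -> T) :
  UltraFilter F -> exists z, F (f @^-1` [set z]).
Proof.
move=> FU; apply: contrapT => nz.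
have hC z : F (~` (f @^-1` [set z])).
  by case: (in_ultra_setVsetC (f @^-1` [set z]) FU) => // hz; case: nz; exists z.
have hs (s : seq T) : F [set x | f x \notin s].
  elim: s => [|z s IH]; first exact: filterS filterT.
  apply: filterS (filterI IH (hC z)) => x [hx /eqP hz].
  by rewrite /= in_cons negb_or hz.
by have /filter_ex [x] := hs (enum T); rewrite /= mem_enum.
Qed.

Definition cofinite_in (A : set nat) : set_system nat :=
  fun B => exists N, forall n, (N <= n)%N -> A n -> B n.

Lemma cofinite_in_proper A : infinite_set A -> ProperFilter (cofinite_in A).
Proof.
move=> Ainf; apply: Build_ProperFilter_ex.
  move=> B [N hN]; apply: contrapT => nB; apply: Ainf.
  apply: (@sub_finite_set _ _ `I_N); last exact: finite_II.
  move=> n An; rewrite /= ltnNge; apply/negP => Nn; apply: nB; exists n.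
  exact: hN.
split; first by exists 0%N.
  move=> B C [N1 h1] [N2 h2]; exists (maxn N1 N2) => n.
  by rewrite geq_max => /andP[n1 n2] An; split; [exact: h1|exact: h2].
by move=> B C BC [N h]; exists N => n Nn An; apply/BC/h.
Qed.

Section UltraproductKernel.
Variables (gT : nat -> finGroupType) (Gamma : finGroupType).
Local Notation G := (prodG gT).
Let I := [set n : nat | (setTfor (gT n) \isog setTfor Gamma)%g].

Lemma iso_exists n : exists f : gT n -> Gamma, I n ->
  [/\ {morph f : x y / (x * y)%g}, injective f & forall z, exists x, f x = z].
Proof.
have [In|nIn] := pselect (I n); last by exists (fun _ => 1%g).
move: (In); rewrite /I /= => /isogP [f injf imf]; exists f => _; split.
- by move=> x y; rewrite morphM ?inE.
- by move=> x y; move/injmP: injf; apply; rewrite inE.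
- move=> z; have : z \in (f @* setTfor (gT n))%g by rewrite imf inE.
  by case/morphimP => x _ _ ->; exists x.
Qed.

(* An isomorphism [gT n -> Gamma] for [n] in [I], junk elsewhere. *)
Definition iota n : gT n -> Gamma := sval (cid (iso_exists n)).

Lemma iota_iso n : I n ->
  [/\ {morph @iota n : x y / (x * y)%g}, injective (@iota n)
   & forall z, exists x : gT n, iota x = z].
Proof. exact: (svalP (cid (iso_exists n))). Qed.

Lemma iota1 n : I n -> iota (1%g : gT n) = 1%g.
Proof.
move=> /iota_iso [iotaM _ _]; apply: (mulgI (iota (1%g : gT n))).
by rewrite -iotaM !mulg1.
Qed.

Lemma iotaV n (x : gT n) : I n -> iota x^-1%g = (iota x)^-1%g.
Proof.
move=> In; have [iotaM _ _] := iota_iso In.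
by apply: (mulIg (iota x)); rewrite -iotaM !mulVg iota1.
Qed.

Variable U : set_system nat.
Hypothesis U_ultra : UltraFilter U.
Hypothesis U_cofinite : cofinite_in I `<=` U.

Let U_I : U I.
Proof. by apply: U_cofinite; exists 0%N. Qed.

Definition ukernel : set G := fun x => U [set n | I n /\ iota (x n) = 1%g].

Lemma ukernel_subgroup : is_subgroup ukernel.
Proof.
split; first by apply: filterS U_I => n In; split; rewrite ?iota1.
split=> [x y hx hy|x hx].
  apply: filterS (filterI hx hy) => n [[In ex] [_ ey]]; split => //.
  by have [iotaM _ _] := iota_iso In; rewrite /prod_mul iotaM ex ey mulg1.
by apply: filterS hx => n [In ex]; split; rewrite // /prod_inv iotaV // ex invg1.
Qed.

Lemma ukernel_finitary t :
  (exists N, forall i, (N < i)%N -> t i = 1%g) -> ukernel t.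
Proof.
move=> [N hN]; apply: U_cofinite; exists N.+1 => n Nn In.
by split; rewrite // hN ?iota1.
Qed.

Lemma ukernel_finite_index :
  exists g : Gamma -> G, forall x, exists z h, ukernel h /\ x = prod_mul (g z) h.
Proof.
have pre n (z : Gamma) : exists x : gT n, I n -> iota x = z.
  have [In|nIn] := pselect (I n); last by exists 1%g.
  by have [_ _ /(_ z) [x hx]] := iota_iso In; exists x.
pose g (z : Gamma) : G := fun n => sval (cid (pre n z)).
have hg z n : I n -> iota (g z n) = z by exact: (svalP (cid (pre n z))).
exists g => x; have [z hz] := ultra_fiber (fun n => iota (x n)) U_ultra.
exists z, (prod_mul (prod_inv (g z)) x); split; last by rewrite prod_mulKVg.
apply: filterS (filterI U_I hz) => n [In /= ex]; split => //.
have [iotaM _ _] := iota_iso In.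
by rewrite /prod_mul /prod_inv iotaM iotaV // hg // ex mulVg.
Qed.

Hypothesis card_gt1 : forall n, (1 < #|gT n|)%N.

(* A sequence of nontrivial elements lies outside [ukernel], hence so does its
   product with any element of [ukernel]. *)
Lemma ukernel_disjoint_coset :
  exists g1 : G, forall h, ukernel h -> ~ ukernel (prod_mul g1 h).
Proof.
have ne n : exists a : gT n, a != 1%g.
  have /card_gt1P [a [b [_ _ ab]]] := card_gt1 n.
  by case: (eqVneq a 1%g) => [ea|]; [exists b; rewrite -ea eq_sym|exists a].
pose g1 : G := fun n => sval (cid (ne n)).
exists g1 => h Hh Hgh; have [_ [ukM ukV]] := ukernel_subgroup.
have /(ukM _ _ Hgh) : ukernel (prod_inv h) by exact: ukV.
rewrite prod_mulgK => Hg1; have /filter_ex [n [In e]] := Hg1.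
have [_ iota_inj _] := iota_iso In.
have : g1 n = 1%g by apply: iota_inj; rewrite e iota1.
by apply/eqP; exact: (svalP (cid (ne n))).
Qed.

End UltraproductKernel.

Theorem mainTheorem6 (R : realType) (gT : nat -> finGroupType) (Gamma : finGroupType)
  (hnontriv : forall n, (1 < #|gT n|)%N)
  (hinf : infinite_set [set n : nat | (setTfor (gT n) \isog setTfor Gamma)%g]) :
  exists H : set (prodG gT), is_subgroup H /\ ~ haar_measurable R H.
Proof.
have [U [U_ultra U_cof]] := ultraFilterLemma (cofinite_in_proper hinf).
have [g g_cosets] := ukernel_finite_index U_ultra U_cof.
have [g1 g1_coset] := ukernel_disjoint_coset U_ultra U_cof hnontriv.
exists (ukernel Gamma U); split; first exact: ukernel_subgroup.
exact: (finite_index_not_haar_measurable hnontriv (ukernel_subgroup U_ultra U_cof)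
  (ukernel_finitary U_cof) g_cosets g1_coset).
Qed.
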